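(* Let $A$ be (the matrix of) a te-lace with at least three rows and let $p=(i,j)$ be a pivot of $A$. Then the rows of $A/\!\!/p$ form a te-lace.
   Context: A set of vectors is identified with the matrix whose rows are these vectors. A matrix is totally equimodular if every set of linearly independent rows forms a matrix of full row rank whose nonzero maximal minors all have the same absolute value, and totally unimodular if all its square submatrices have determinant in $\{0,\pm1\}$. A linearly independent set of $\{0,\pm1\}$-vectors is a te-set if its matrix is totally equimodular, a tu-set if its matrix is totally unimodular, and a te-lace if it is a te-set, not a tu-set, and all its proper subsets are tu-sets. A pivot of $A$ is a position $p=(i,j)$ with $A_i^j\neq0$; $A/p$ is obtained by dividing row $i$ by $A_i^j$ and adding multiples of it to the other rows so that column $j$ becomes the $i$-th unit vector; the trim $A/\!\!/p$ is obtained from $A/p$ by deleting row $i$ and column $j$. *)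

From HB Require Import structures.
From mathcomp Require Import all_boot all_order all_algebra.
Set Implicit Arguments. Unset Strict Implicit. Unset Printing Implicit Defensive.
Import Order.TTheory GRing.Theory Num.Theory.
Local Open Scope ring_scope.

(* A set of vectors is identified with the matrix whose rows are these vectors. *)

Definition pm1_mx (m n : nat) (A : 'M[rat]_(m, n)) : Prop :=
  forall i j, A i j \in [:: 0; 1; -1].

Definition subsq (m n k : nat) (A : 'M[rat]_(m, n)) (f : 'I_k -> 'I_m)
  (g : 'I_k -> 'I_n) : 'M[rat]_k := mxsub f g A.

Definition totally_unimodular (m n : nat) (A : 'M[rat]_(m, n)) : Prop :=
  forall k (f : 'I_k -> 'I_m) (g : 'I_k -> 'I_n),
    \det (subsq A f g) \in [:: 0; 1; -1].

Definition totally_equimodular (m n : nat) (A : 'M[rat]_(m, n)) : Prop :=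
  forall k (f : 'I_k -> 'I_m), row_free (rowsub f A) ->
    \rank (rowsub f A) = k /\
    forall g1 g2 : 'I_k -> 'I_n,
      \det (subsq A f g1) != 0 -> \det (subsq A f g2) != 0 ->
      `|\det (subsq A f g1)| = `|\det (subsq A f g2)|.

Definition rows_of (m n : nat) (A : 'M[rat]_(m, n)) (S : {set 'I_m}) :
  'M[rat]_(#|S|, n) := rowsub (fun r : 'I_#|S| => enum_val r) A.

Definition te_set (m n : nat) (A : 'M[rat]_(m, n)) : Prop :=
  pm1_mx A /\ row_free A /\ totally_equimodular A.

Definition tu_set (m n : nat) (A : 'M[rat]_(m, n)) : Prop :=
  pm1_mx A /\ row_free A /\ totally_unimodular A.

Definition te_lace (m n : nat) (A : 'M[rat]_(m, n)) : Prop :=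
  te_set A /\ ~ tu_set A /\
  forall S : {set 'I_m}, S \proper [set: 'I_m] -> tu_set (rows_of A S).

(* Pivoting A/p at p = (i,j): divide row i by A i j, and subtract multiples
   of it from the other rows so that column j becomes the i-th unit vector. *)
Definition pivot_mx (m n : nat) (A : 'M[rat]_(m, n)) (i : 'I_m) (j : 'I_n) :
  'M[rat]_(m, n) :=
  \matrix_(r, c) if r == i then A i c / A i j
                 else A r c - A r j / A i j * A i c.

Definition trim_mx (m n : nat) (A : 'M[rat]_(m.+1, n.+1)) (i : 'I_m.+1)
  (j : 'I_n.+1) : 'M[rat]_(m, n) :=
  row' i (col' j (pivot_mx A i j)).

From mathcomp Require Import all_boot all_order all_algebra ring perm.
Import Order.TTheory GRing.Theory Num.Theory.
Set Implicit Arguments. Unset Strict Implicit. Unset Printing Implicit Defensive.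
Local Open Scope ring_scope.

(* Pivoting is Gaussian elimination on the pivot row, so by the Schur
   complement formula every minor of [A] through the pivot [(i, j)] equals
   [A i j = +-1] times the corresponding minor of the trim [A//p].  Hence a
   minor of [A//p] avoiding some row is +-1 times a minor of a proper subset
   of [A], which is totally unimodular: this gives the entries of [A//p]
   (there are at least two rows) and total unimodularity of its proper
   subsets.  Equimodularity of [A//p] is inherited from that of [A].  Were
   [A//p] totally unimodular, every minor of [A] through all rows would, by
   equimodularity of [A], have the absolute value of a maximal minor of
   [A//p], so [A] itself would be totally unimodular. *)

Lemma det_block_schur (R : comUnitRingType) n1 n2 (Aul : 'M[R]_n1)
    (Aur : 'M_(n1, n2)) (Adl : 'M_(n2, n1)) (Adr : 'M_n2) : Aul \in unitmx ->
  \det (block_mx Aul Aur Adl Adr) = \det Aul * \det (Adr - Adl *m invmx Aul *m Aur).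
Proof.
move=> uAul.
pose L := block_mx 1%:M 0 (- (Adl *m invmx Aul)) 1%:M.
have -> : block_mx Aul Aur Adl Adr = invmx L *m (L *m block_mx Aul Aur Adl Adr).
  by rewrite mulmxA mulVmx ?mul1mx // unitmxE /L det_lblock !det1 mulr1 unitr1.
rewrite det_mulmx det_inv /L det_lblock !det1 mulr1 invr1 mul1r.
rewrite mulmx_block !mul1mx !mul0mx !addr0 mulNmx mulmxKV // addNr.
rewrite det_ublock -mulNmx -mulmxA addrC; congr (_ * \det (_ + _)).
by rewrite !mulNmx mulmxA.
Qed.

Lemma det_pivot (R : fieldType) k (M : 'M[R]_k.+1) : M 0 0 != 0 ->
  \det M = M 0 0 * \det (\matrix_(r, c)
    (M (lift 0 r) (lift 0 c) - M (lift 0 r) 0 / M 0 0 * M 0 (lift 0 c))).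
Proof.
move=> M00_neq0.
have lshift0 : lshift k (0 : 'I_1) = 0 by apply: val_inj.
have rshift_lift (r : 'I_k) : rshift 1 r = lift 0 r by apply: val_inj.
pose N : 'M[R]_(1 + k) := M.
have ulN : ulsubmx N = (M 0 0)%:M by rewrite [LHS]mx11_scalar !mxE lshift0.
have -> : \det M = \det (block_mx (ulsubmx N) (ursubmx N) (dlsubmx N) (drsubmx N)).
  by rewrite submxK.
rewrite det_block_schur ulN; last by rewrite unitmxE det_scalar1 unitfE.
rewrite det_scalar1 invmx_scalar mul_mx_scalar; congr (_ * \det _).
apply/matrixP => r c; rewrite !mxE big_ord1 !mxE lshift0 !rshift_lift.
by rewrite /N [_^-1 * _]mulrC.
Qed.

(* Selects the rows (columns) of the minor of [A] through the pivot row
   (column) [x0] that corresponds to the minor of the trim selected by [f]. *)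
Definition ord_extend p (x0 : 'I_p.+1) k (f : 'I_k -> 'I_p) : 'I_k.+1 -> 'I_p.+1 :=
  fun x => if unlift 0 x is Some y then lift x0 (f y) else x0.

Lemma ord_extend0 p (x0 : 'I_p.+1) k (f : 'I_k -> 'I_p) : ord_extend x0 f 0 = x0.
Proof. by rewrite /ord_extend unlift_none. Qed.

Lemma ord_extendS p (x0 : 'I_p.+1) k (f : 'I_k -> 'I_p) y :
  ord_extend x0 f (lift 0 y) = lift x0 (f y).
Proof. by rewrite /ord_extend liftK. Qed.

Lemma ord_extend_inj p (x0 : 'I_p.+1) k (f : 'I_k -> 'I_p) :
  injective f -> injective (ord_extend x0 f).
Proof.
move=> f_inj x y.
case: (unliftP 0 x) => [x'|] ->; case: (unliftP 0 y) => [y'|] ->;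
  rewrite ?ord_extendS ?ord_extend0 //.
- by move/lift_inj/f_inj->.
- by move=> e; have := neq_lift x0 (f x'); rewrite e eqxx.
- by move=> e; have := neq_lift x0 (f y'); rewrite -e eqxx.
Qed.

Lemma trim_mxE m n (A : 'M[rat]_(m.+1, n.+1)) i j r c :
  trim_mx A i j r c = A (lift i r) (lift j c) - A (lift i r) j / A i j * A i (lift j c).
Proof. by rewrite !mxE eq_sym (negbTE (neq_lift i r)). Qed.

Lemma det_subsq_trim m n (A : 'M[rat]_(m.+1, n.+1)) i j k (f : 'I_k -> 'I_m) g :
  A i j != 0 ->
  \det (subsq A (ord_extend i f) (ord_extend j g)) = A i j * \det (subsq (trim_mx A i j) f g).
Proof.
move=> Aij_neq0; rewrite det_pivot !mxE !ord_extend0 //; congr (_ * \det _).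
by apply/matrixP => r c; rewrite mxE [RHS]mxE trim_mxE !mxE !ord_extendS !ord_extend0.
Qed.

Lemma row_free_trim m n (A : 'M[rat]_(m.+1, n.+1)) i j :
  A i j != 0 -> row_free A -> row_free (trim_mx A i j).
Proof.
move=> Aij_neq0 freeA; apply/inj_row_free => v vB0.
(* [w] extends [v] by the coefficient on row [i] that cancels column [j]
   of [w *m A]; its other columns are those of [v *m trim_mx A i j]. *)
pose s := \sum_y v 0 y * A (lift i y) j.
pose w : 'rV_m.+1 := \row_x (if unlift i x is Some y then v 0 y else - s / A i j).
have w_lift y : w 0 (lift i y) = v 0 y by rewrite mxE liftK.
suff /(row_free_inj freeA) w0 : w *m A = 0 *m A.
  by apply/rowP => y; rewrite -w_lift w0 !mxE.
rewrite mul0mx; apply/rowP => c; rewrite !mxE (bigD1_ord i) //= mxE unlift_none.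
under eq_bigr => y _ do rewrite w_lift.
case: (unliftP j c) => [c'|] ->; last by rewrite -/s; field.
have := congr1 (fun M : 'rV_n => M 0 c') vB0; rewrite !mxE => vBc0.
have -> : \sum_(y < m) v 0 y * A (lift i y) (lift j c') = s / A i j * A i (lift j c').
  apply/eqP; rewrite -subr_eq0 /s !mulr_suml -sumrB -[X in _ == X]vBc0.
  by apply/eqP/eq_bigr => y _; rewrite trim_mxE; ring.
by field.
Qed.

Lemma row_free_rowsub (F : fieldType) p N k (B : 'M[F]_(p, N)) (f : 'I_k -> 'I_p) :
  injective f -> row_free B -> row_free (rowsub f B).
Proof.
move=> f_inj freeB; apply/inj_row_free => v vfB0.
have : v *m rowsub f 1%:M *m B = 0 *m B by rewrite -mulmxA -rowsubE vfB0 mul0mx.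
move/(row_free_inj freeB)/rowP => vf0; apply/rowP => x.
have := vf0 (f x); rewrite !mxE (bigD1 x) //= big1 => [|y yx].
  by rewrite !mxE eqxx mulr1 addr0.
by rewrite !mxE (inj_eq f_inj) (negbTE yx) mulr0.
Qed.

Lemma row_free_det_mxsub (F : fieldType) p N k (B : 'M[F]_(p, N)) (f : 'I_k -> 'I_p) g :
  \det (mxsub f g B) != 0 -> row_free (rowsub f B).
Proof.
have -> : mxsub f g B = rowsub f B *m colsub g 1%:M.
  by rewrite mulmx_colsub mulmx1; apply/matrixP => x y; rewrite !mxE.
rewrite -unitfE -unitmxE => /mxrank_unit rk_fgB.
by rewrite /row_free eqn_leq rank_leq_row -{1}rk_fgB mxrankM_maxl.
Qed.

Lemma row_free_maximal_minor (F : fieldType) p N (B : 'M[F]_(p, N)) :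
  row_free B -> exists h : 'I_p -> 'I_N, \det (mxsub id h B) != 0.
Proof.
move=> freeB; have := maxrowsub_free B^T; move: (maxrankfun B^T).
rewrite mxrank_tr (eqP freeB) => h freeBh; exists h.
have -> : mxsub id h B = (rowsub h B^T)^T by apply/matrixP => x y; rewrite !mxE.
by rewrite det_tr -unitfE -unitmxE -row_free_unit.
Qed.

Lemma norm_det_mxsub_perm (R : numDomainType) p N (B : 'M[R]_(p, N))
    (f : 'I_p -> 'I_p) g :
  injective f -> `|\det (mxsub f g B)| = `|\det (mxsub id g B)|.
Proof.
move=> f_inj; have -> : mxsub f g B = row_perm (perm f_inj) (mxsub id g B).
  by apply/matrixP => x y; rewrite !mxE permE.
by rewrite row_permE det_mulmx det_perm normrM normrX normrN1 expr1n mul1r.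
Qed.

Lemma norm_det_mxsub_onto (R : numDomainType) p N k (B : 'M[R]_(p, N))
    (f : 'I_k -> 'I_p) g (f0 : 'I_p -> 'I_p) :
  injective f0 -> \det (mxsub f g B) != 0 -> (forall r, r \in codom f) ->
  exists h : 'I_p -> 'I_N, `|\det (mxsub f g B)| = `|\det (mxsub f0 h B)|.
Proof.
move=> f0_inj detB_neq0 f_onto.
have f_inj : injective f.
  move=> x y fxy; apply/eqP/negPn/negP => xy; move/eqP: detB_neq0; apply.
  by apply: (determinant_alternate xy) => c; rewrite !mxE fxy.
have k_eq_p : k = p.
  by rewrite -[k]card_ord -(card_codom f_inj) eq_cardT // -cardT card_ord.
subst k; exists g.
by rewrite (norm_det_mxsub_perm _ _ f_inj) (norm_det_mxsub_perm _ _ f0_inj).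
Qed.

Lemma pm1E (R : realDomainType) (a : R) :
  (a \in [:: 0; 1; -1]) = (`|a| \in [:: 0; 1]).
Proof. by rewrite !inE normr_eq0 eqr_norml ler01 andbT orbA. Qed.

Lemma pm1_norm (R : realDomainType) (a : R) :
  a \in [:: 0; 1; -1] -> a != 0 -> `|a| = 1.
Proof. by rewrite pm1E !inE normr_eq0 => /orP [->|/eqP]. Qed.

Lemma pm1_norm_eq (R : realDomainType) (a b : R) :
  `|a| = `|b| -> b \in [:: 0; 1; -1] -> a \in [:: 0; 1; -1].
Proof. by rewrite !pm1E => ->. Qed.

Lemma det_subsq_rows_of_tu m n (A : 'M[rat]_(m, n)) (S : {set 'I_m}) k
    (f : 'I_k -> 'I_m) g :
  tu_set (rows_of A S) -> (forall x, f x \in S) -> \det (subsq A f g) \in [:: 0; 1; -1].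
Proof.
case: k f g => [|k] f g [_ [_ tuAS]] fS; first by rewrite det_mx00 !inE eqxx orbT.
pose h x := enum_rank_in (fS ord0) (f x).
have -> : subsq A f g = subsq (rows_of A S) h g.
  by apply/matrixP => x y; rewrite !mxE /h enum_rankK_in.
exact: tuAS.
Qed.

Section TrimLace.

Variables (m n : nat) (A : 'M[rat]_(m.+1, n.+1)) (i : 'I_m.+1) (j : 'I_n.+1).
Hypotheses (laceA : te_lace A) (Aij_neq0 : A i j != 0) (m_gt1 : (1 < m)%N).

Local Notation B := (trim_mx A i j).

Lemma det_subsq_lace_avoid k (f : 'I_k -> 'I_m.+1) g r0 :
  (forall x, f x != r0) -> \det (subsq A f g) \in [:: 0; 1; -1].
Proof.
have [_ [_ tu_proper]] := laceA; move=> f_avoid.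
apply: (det_subsq_rows_of_tu (S := [set~ r0])) => [|x]; last by rewrite in_setC1.
apply: tu_proper; rewrite properT; apply/eqP => /setP/(_ r0).
by rewrite in_setC1 eqxx in_setT.
Qed.

Lemma norm_det_subsq_trim k (f : 'I_k -> 'I_m) g :
  `|\det (subsq B f g)| = `|\det (subsq A (ord_extend i f) (ord_extend j g))|.
Proof.
have [[pmA _] _] := laceA.
by rewrite det_subsq_trim // normrM (pm1_norm (pmA i j) Aij_neq0) mul1r.
Qed.

Lemma det_subsq_trim_avoid k (f : 'I_k -> 'I_m) g r0 :
  (forall x, f x != r0) -> \det (subsq B f g) \in [:: 0; 1; -1].
Proof.
move=> f_avoid; apply: pm1_norm_eq (norm_det_subsq_trim f g) _.
have ext_avoid x : ord_extend i f x != lift i r0.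
  case: (unliftP 0 x) => [y|] ->; rewrite ?ord_extendS ?ord_extend0 ?neq_lift //.
  by rewrite (inj_eq lift_inj).
exact: det_subsq_lace_avoid ext_avoid.
Qed.

(* Entries are 1x1 minors, and a single row avoids one of the [m >= 2] rows. *)
Lemma pm1_trim : pm1_mx B.
Proof.
move=> r c.
have -> : B r c = \det (subsq B (fun _ : 'I_1 => r) (fun _ => c)) by rewrite det_mx11 !mxE.
have [r0 r0_neq_r] : exists r0 : 'I_m, r0 != r.
  have [/eqP r_eq0|r_neq0] := boolP (val r == 0%N).
    by exists (Ordinal m_gt1); rewrite -(inj_eq val_inj) r_eq0.
  by exists (Ordinal (ltnW m_gt1)); rewrite -(inj_eq val_inj) eq_sym.
by apply: (@det_subsq_trim_avoid _ _ _ r0) => _; rewrite eq_sym.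
Qed.

Lemma te_trim : totally_equimodular B.
Proof.
have [[_ [_ teA]] _] := laceA.
move=> k f freeBf; split; first exact/eqP.
move=> g1 g2 detB1 detB2; rewrite !norm_det_subsq_trim.
have detA g : \det (subsq B f g) != 0 ->
    \det (subsq A (ord_extend i f) (ord_extend j g)) != 0.
  by move=> detBg; rewrite det_subsq_trim // mulf_neq0.
have [_ te] := teA _ _ (row_free_det_mxsub (detA _ detB1)).
exact: te (detA _ detB1) (detA _ detB2).
Qed.

(* A minor of [A] through every row is, up to sign, a maximal minor of [A];
   by equimodularity its absolute value is that of a maximal minor through
   the pivot, i.e. of a maximal minor of [B]. *)
Lemma not_tu_trim : ~ tu_set B.
Proof.
move=> [_ [_ tuB]]; have [[pmA [freeA teA]] [not_tuA _]] := laceA.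
apply: not_tuA; split; [exact: pmA | split; [exact: freeA | move=> k f g]].
have [/existsP [r0 r0_notin]|/existsPn f_onto] := boolP [exists r0, r0 \notin codom f].
  apply: (@det_subsq_lace_avoid _ _ _ r0) => x.
  by apply: contraNneq r0_notin => <-; exact: codom_f.
have [->|detA_neq0] := eqVneq (\det (subsq A f g)) 0; first by rewrite inE eqxx.
have [h detBh] := row_free_maximal_minor (row_free_trim Aij_neq0 freeA).
pose f0 := ord_extend i (@id 'I_m).
have detA0 : \det (subsq A f0 (ord_extend j h)) != 0 by rewrite det_subsq_trim // mulf_neq0.
have [g' eq_g'] := norm_det_mxsub_onto (ord_extend_inj (x0 := i) (@inj_id 'I_m)) detA_neq0
  (fun r => negbNE (f_onto r)).
have detAg' : \det (subsq A f0 g') != 0 by rewrite -normr_eq0 -eq_g' normr_eq0.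
have [_ te] := teA _ _ (row_free_det_mxsub detA0).
apply: (pm1_norm_eq (b := \det (subsq B id h))); last exact: tuB.
by rewrite eq_g' (te _ _ detAg' detA0) norm_det_subsq_trim.
Qed.

Lemma tu_rows_of_trim (S : {set 'I_m}) :
  S \proper [set: 'I_m] -> tu_set (rows_of B S).
Proof.
rewrite properT => S_neqT.
have [r0 r0_notin] : exists r0, r0 \notin S.
  apply/existsP; rewrite -negb_forall; apply: contra S_neqT => /forallP S_full.
  by apply/eqP/setP => r; rewrite in_setT S_full.
have [_ [freeA _]] := laceA.1.
split; first by move=> r c; rewrite mxE; apply: pm1_trim.
split; first by apply: row_free_rowsub (row_free_trim Aij_neq0 freeA); apply: enum_val_inj.
move=> k f g; have -> : subsq (rows_of B S) f g = subsq B (enum_val \o f) g.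
  by apply/matrixP => x y; rewrite !mxE.
apply: (@det_subsq_trim_avoid _ _ _ r0) => x.
by apply: contraNneq r0_notin => <-; exact: enum_valP.
Qed.

End TrimLace.

Theorem mainTheorem6 (m n : nat) (A : 'M[rat]_(m.+1, n.+1))
  (i : 'I_m.+1) (j : 'I_n.+1) :
  te_lace A -> (3 <= m.+1)%N -> A i j != 0 -> te_lace (trim_mx A i j).
Proof.
move=> laceA m_ge3 Aij_neq0; have m_gt1 : (1 < m)%N by [].
have [[_ [freeA _]] _] := laceA.
split; first by split; [|split]; [exact: pm1_trim | exact: row_free_trim | exact: te_trim].
by split; [exact: not_tu_trim | exact: tu_rows_of_trim].
Qed.
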